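(* The size $z_{77sr}$ of the self-referencing LZ77 factorization satisfies, for each edit type $\ast\in\{\mathrm{sub},\mathrm{ins},\mathrm{del}\}$: $\mathsf{MS}_{\ast}(z_{77sr},n)\le 2$ and $\mathsf{AS}_{\ast}(z_{77sr},n)\le z_{77sr}$, i.e. $z_{77sr}(T')\le 2z_{77sr}(T)$ for every string $T$ of length $n$ and every $T'$ obtained from $T$ by one edit of that type.
   Context: Strings are over an alphabet $\Sigma$; $\mathsf{ed}$ is the edit distance. $\mathsf{MS}_{\mathrm{sub}}(C,n)=\max_{T\in\Sigma^n}\{C(T')/C(T): T'\in\Sigma^n,\ \mathsf{ed}(T,T')=1\}$, with $\mathsf{MS}_{\mathrm{ins}},\mathsf{MS}_{\mathrm{del}}$ analogous for $T'$ of length $n+1$, resp. $n-1$, and $\mathsf{AS}_\ast$ analogous with $C(T')-C(T)$. The self-referencing LZ77 factorization of $T$ is $T=f_1\cdots f_z$ where for each $1\le i<z$, $f_i[1..|f_i|-1]$ is the longest prefix of $f_i\cdots f_z$ that has an occurrence in $T$ beginning at a position in $[1..|f_1\cdots f_{i-1}|]$ (the occurrence may overlap $f_i$), i.e. $f_i$ is one character longer than that; $f_z$ is the remaining suffix; $z_{77sr}(T)=z$. *)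

From mathcomp Require Import all_boot.
Set Implicit Arguments. Unset Strict Implicit. Unset Printing Implicit Defensive.

Section LZ.
Variable A : eqType.

Fixpoint ed (s t : seq A) {struct s} : nat :=
  match s with
  | [::] => size t
  | a :: s' =>
    let fix edt (t : seq A) : nat :=
      match t with
      | [::] => size s
      | b :: t' => minn (minn (ed s' t).+1 (edt t').+1) (ed s' t' + (a != b))
      end
    in edt t
  end.

(* Length of the longest prefix of T[i..] (0-based positions) that has an
   occurrence in T starting at some position j < i (overlaps allowed). *)
Definition lpf (T : seq A) (i : nat) : nat :=
  \max_(l < (size T - i).+1 |
        [exists j : 'I_i, take l (drop j T) == take l (drop i T)]) (l : nat).

Definition phrase_len (T : seq A) (i : nat) : nat :=
  minn (lpf T i).+1 (size T - i).

(* Number of phrases of the greedy factorization of T[i..]; fuel bounds the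
   number of phrases (each phrase has length >= 1). *)
Fixpoint z77sr_from (T : seq A) (fuel i : nat) : nat :=
  match fuel with
  | 0 => 0
  | f.+1 => if i < size T then (z77sr_from T f (i + phrase_len T i)).+1 else 0
  end.

Definition z77sr (T : seq A) : nat := z77sr_from T (size T) 0.

End LZ.

From mathcomp Require Import all_boot zify.
Set Implicit Arguments. Unset Strict Implicit. Unset Printing Implicit Defensive.

(* Greedy parsing is optimal among parses
   into "earlier copy + one letter" blocks: the end of the phrase starting at
   [i] is monotone in [i], hence [zfrom] is antitone, and an earlier copy of
   [X[i..i+m)] gives [zfrom X i <= 1 + zfrom X (i+m+1)].
   Let [T'] arise from [T = u x v] by replacing [x] by [y], [|x|, |y| <= 1].
   A phrase of [T] whose source lies inside [u] or inside [v] still has a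
   source in [T'], and a source straddling the edit splits into two copies.
   Hence in [T'] each phrase of [T] after the edit costs at most two blocks,
   each phrase before it one, and the phrase containing the edit three (copy,
   edited letter, copy), or only two when it is the first phrase, which is a
   single letter. This adds up to at most [2 z77sr T]. *)

Section TakeDrop.
Variable A : eqType.
Implicit Types X Y u v w x : seq A.

Lemma eq_take_drop_shift X Y i j m a b :
  take m (drop i X) = take m (drop j Y) -> b + a <= m ->
  take a (drop (i + b) X) = take a (drop (j + b) Y).
Proof.
move=> eqXY le_m.
have shift Z k : take a (drop (k + b) Z) = take a (drop b (take m (drop k Z))).
  have -> : m = (m - b) + b by lia.
  by rewrite -take_drop take_takel ?drop_drop ?(addnC b) //; lia.
by rewrite !shift eqXY.
Qed.

Lemma eq_take_drop_le X Y i j m a :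
  take m (drop i X) = take m (drop j Y) -> a <= m ->
  take a (drop i X) = take a (drop j Y).
Proof. by move=> eqXY le_am; rewrite -(take_takel (drop i X) le_am) eqXY take_takel. Qed.

Lemma take_drop_catl u w t k : t + k <= size u ->
  take k (drop t (u ++ w)) = take k (drop t u).
Proof.
move=> le_tk; rewrite drop_cat; case: ifP => lt_t.
  by rewrite takel_cat // size_drop; lia.
have -> : k = 0 by lia.
by rewrite !take0.
Qed.

Lemma drop_cat2 u x v t : drop (size u + size x + t) (u ++ x ++ v) = drop t v.
Proof. by rewrite -addnA addnC -drop_drop drop_size_cat // addnC -drop_drop drop_size_cat. Qed.

End TakeDrop.

Section Phrases.
Variables (A : eqType) (X : seq A).

Definition zfrom i := z77sr_from X (size X) i.

Lemma phrase_len_le i : phrase_len X i <= size X - i.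
Proof. exact: geq_minr. Qed.

Lemma phrase_len_gt0 i : i < size X -> 0 < phrase_len X i.
Proof. by rewrite /phrase_len; lia. Qed.

Lemma z77sr_from_fuel f g i : size X - i <= f -> size X - i <= g ->
  z77sr_from X f i = z77sr_from X g i.
Proof.
elim: f g i => [|f IH] [|g] i le_f le_g //=; case: ifP => // lt_i; try lia.
by congr S; apply: IH; have := phrase_len_gt0 lt_i; lia.
Qed.

Lemma zfrom_step i : i < size X -> zfrom i = (zfrom (i + phrase_len X i)).+1.
Proof.
move=> lt_i; rewrite /zfrom (@z77sr_from_fuel _ (size X - i).-1.+1 i); [|lia|lia].
rewrite /= lt_i; congr S; apply: z77sr_from_fuel; have := phrase_len_gt0 lt_i; lia.
Qed.

Lemma zfrom_out i : size X <= i -> zfrom i = 0.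
Proof. by rewrite /zfrom => le_i; case: (size X) => [|k] //=; case: ifP; lia. Qed.

Lemma phrase_ind (P : nat -> Prop) :
  (forall i, size X <= i -> P i) ->
  (forall i, i < size X -> P (i + phrase_len X i) -> P i) ->
  forall i, P i.
Proof.
move=> Pout Pstep i; have [k] := ubnP (size X - i); elim: k i => // k IH i lt_k.
case: (leqP (size X) i) => [|lt_i]; first exact: Pout.
by apply: (Pstep _ lt_i); apply: IH; have := phrase_len_gt0 lt_i; lia.
Qed.

Lemma lpf_max i j l : j < i -> l <= size X - i ->
  take l (drop j X) = take l (drop i X) -> l <= lpf X i.
Proof.
move=> lt_ji le_l eq_l; have lt_l : l < (size X - i).+1 by [].
apply: (@leq_trans (Ordinal lt_l)) => //.
apply: (leq_bigmax_cond (F := fun l : 'I_(size X - i).+1 => nat_of_ord l)).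
by apply/existsP; exists (Ordinal lt_ji); rewrite /= eq_l.
Qed.

Lemma lpf_source i : lpf X i = 0 \/
  exists2 j, j < i & take (lpf X i) (drop j X) = take (lpf X i) (drop i X).
Proof.
pose has_source m :=
  m = 0 \/ exists2 j, j < i & take m (drop j X) = take m (drop i X).
rewrite /lpf; apply: (big_ind has_source) => [|a b|l /existsP [j /eqP eq_j]].
- by left.
- by rewrite /maxn; case: ifP.
- by right; exists j.
Qed.

Lemma lpf0 : lpf X 0 = 0.
Proof. by case: (lpf_source 0) => // [[]]. Qed.

Lemma lpf_le i : lpf X i <= size X - i.
Proof. by apply/bigmax_leqP => l _; rewrite -ltnS. Qed.

Lemma phrase_len0 : 0 < size X -> phrase_len X 0 = 1.
Proof. by rewrite /phrase_len lpf0; lia. Qed.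

Lemma phrase_source s : 0 < s -> exists2 j, j < s &
  take (phrase_len X s).-1 (drop j X) = take (phrase_len X s).-1 (drop s X).
Proof.
move=> gt0_s; case: (lpf_source s) => [lpf_0|[j lt_js eq_j]].
  by exists 0 => //; rewrite /phrase_len lpf_0 (_ : _.-1 = 0) ?take0 //; lia.
by exists j => //; apply: eq_take_drop_le eq_j _; rewrite /phrase_len; lia.
Qed.

Lemma phrase_end_mono i i' : i <= i' -> i' < size X ->
  i + phrase_len X i <= i' + phrase_len X i'.
Proof.
move=> le_ii' lt_i'; have := phrase_len_gt0 lt_i'; have le_lpf := lpf_le i.
rewrite /phrase_len; case: (lpf_source i) => [-> | [j lt_ji eq_j]]; first lia.
case: (leqP (lpf X i) (i' - i)) => [|lt_d]; first lia.
suff : lpf X i - (i' - i) <= lpf X i' by lia.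
apply: (@lpf_max i' (j + (i' - i))); try lia.
by rewrite -[in drop i' X](subnKC le_ii'); apply: eq_take_drop_shift eq_j _; lia.
Qed.

Lemma zfrom_antitone i i' : i <= i' -> zfrom i' <= zfrom i.
Proof.
elim/phrase_ind: i i' => [i le_i|i lt_i IH] i' le_ii'; first by rewrite !zfrom_out //; lia.
case: (leqP (size X) i') => [|lt_i']; first by move/zfrom_out->.
by rewrite zfrom_step // [zfrom i]zfrom_step // ltnS IH // phrase_end_mono.
Qed.

Lemma zfrom_leS i : zfrom i <= (zfrom i.+1).+1.
Proof.
case: (leqP (size X) i) => [|lt_i]; first by move/zfrom_out->.
by rewrite zfrom_step // ltnS zfrom_antitone //; have := phrase_len_gt0 lt_i; lia.
Qed.

Lemma zfrom_copy i j m : j < i -> i + m <= size X ->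
  take m (drop j X) = take m (drop i X) -> zfrom i <= (zfrom (i + m + 1)).+1.
Proof.
move=> lt_ji le_m eq_m; case: (leqP (size X) i) => [|lt_i]; first by move/zfrom_out->.
have le_lpf : m <= lpf X i by apply: (lpf_max lt_ji) => //; lia.
rewrite zfrom_step // ltnS; case: (leqP (i + m + 1) (size X)) => [le_end|gt_end].
  by apply: zfrom_antitone; rewrite /phrase_len; lia.
by rewrite (@zfrom_out (i + m + 1)) ?zfrom_out //; rewrite /phrase_len; lia.
Qed.

End Phrases.

(* Substitution, insertion and deletion all replace a factor [x] of [T] by [y]
   with [|x|, |y| <= 1]; the edit sits at position [p = |u|]. *)
Section OneEdit.
Variables (A : eqType) (u v x y : seq A).
Hypotheses (le_x1 : size x <= 1) (le_y1 : size y <= 1).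
Local Notation T := (u ++ x ++ v).
Local Notation T' := (u ++ y ++ v).
Local Notation p := (size u).
Local Notation dx := (size x).
Local Notation dy := (size y).
Local Notation z := (zfrom T).
Local Notation z' := (zfrom T').

Lemma size_T : size T = p + dx + size v.
Proof. by rewrite !size_cat addnA. Qed.

Lemma size_T' : size T' = p + dy + size v.
Proof. by rewrite !size_cat addnA. Qed.

Lemma take_drop_before t k : t + k <= p -> take k (drop t T) = take k (drop t T').
Proof. by move=> le_tk; rewrite !take_drop_catl. Qed.

Lemma take_drop_after t k :
  take k (drop (p + dx + t) T) = take k (drop (p + dy + t) T').
Proof. by rewrite !drop_cat2. Qed.

Lemma zfrom'_copy_u q r m : r < q -> r + m <= p -> q + m <= size T' ->
  take m (drop q T') = take m (drop r T) -> z' q <= (z' (q + m + 1)).+1.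
Proof.
move=> lt_rq le_rm le_m eq_m; apply: (zfrom_copy lt_rq) => //.
by rewrite eq_m take_drop_before.
Qed.

Lemma zfrom'_copy_v q r m : p + dy + r < q -> q + m <= size T' ->
  take m (drop q T') = take m (drop (p + dx + r) T) -> z' q <= (z' (q + m + 1)).+1.
Proof.
move=> lt_r le_m eq_m; apply: (@zfrom_copy _ _ _ (p + dy + r)) => //.
by rewrite eq_m take_drop_after.
Qed.

Lemma zfrom'_copy q r m :
  take m (drop q T') = take m (drop r T) -> q + m <= size T' ->
  r + dy < q + dx -> (r < p -> r < q) ->
  z' q <= (z' (q + m + 1)).+2.
Proof.
move=> eq_m le_m lt_r src_u.
case: (leqP (r + m) p) => [le_rm|lt_pr].
  apply: leqW; case: (posnP m) => [->|gt0_m]; first by rewrite addn0 addn1 zfrom_leS.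
  by apply: zfrom'_copy_u eq_m; [apply: src_u | |]; lia.
case: (leqP (p + dx) r) => [le_r|lt_r'].
  apply: leqW; apply: (@zfrom'_copy_v _ (r - p - dx)) => //; first lia.
  by rewrite eq_m; congr (take _ (drop _ _)); lia.
(* A source straddling the edit splits into its part in [u], a literal, and
   its part in [v]. *)
have cut_p : z' q <= (z' (q + (p - r) + 1)).+1.
  case: (posnP (p - r)) => [->|gt0_pr]; first by rewrite addn0 addn1 zfrom_leS.
  apply: (@zfrom'_copy_u _ r); [apply: src_u; lia | lia | lia |].
  by apply: eq_take_drop_le eq_m _; lia.
suff : z' (q + (p - r) + 1) <= (z' (q + m + 1)).+1 by lia.
rewrite (_ : q + m + 1 = q + (p - r) + 1 + (m - (p - r) - 1) + 1); last lia.
apply: (@zfrom'_copy_v _ (1 - dx)); try lia.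
have := eq_take_drop_shift (b := p - r + 1) (a := m - (p - r) - 1) eq_m.
by rewrite (_ : r + _ = p + dx + (1 - dx)); [rewrite addnA; apply; lia | lia].
Qed.

Lemma zfrom'_after s : p < s -> z' (s - dx + dy) <= 2 * z s.
Proof.
have sT := size_T; have sT' := size_T'.
elim/(@phrase_ind _ T): s => [s le_s | s lt_s IH] lt_ps; first by rewrite !zfrom_out; lia.
have [j lt_js eq_j] := phrase_source T (leq_ltn_trans (leq0n p) lt_ps).
have gt0_len := phrase_len_gt0 lt_s; have le_len := phrase_len_le T s.
have copy : z' (s - dx + dy) <= (z' (s + phrase_len T s - dx + dy)).+2.
  rewrite (_ : s + _ - dx + dy = s - dx + dy + (phrase_len T s).-1 + 1); last lia.
  apply: (zfrom'_copy (r := j)); try lia.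
  have := take_drop_after (s - p - dx) (phrase_len T s).-1.
  rewrite (_ : p + dx + _ = s) ?eq_j => [->|]; [congr (take _ (drop _ _)) | ]; lia.
by rewrite (zfrom_step lt_s); have := IH (ltn_addr _ lt_ps); lia.
Qed.

Lemma zfrom'_phrase_prefix s m : 0 < s -> s + m <= p -> m < phrase_len T s ->
  z' s <= (z' (s + m + 1)).+1.
Proof.
move=> gt0_s le_m lt_m; have [j lt_js eq_j] := phrase_source T gt0_s.
apply: (@zfrom'_copy_u _ j); [done | lia | rewrite size_T'; lia |].
by rewrite -take_drop_before //; symmetry; apply: eq_take_drop_le eq_j _; lia.
Qed.

Lemma zfrom'_edited_phrase s : 0 < s -> s <= p -> p < s + phrase_len T s ->
  z' s <= (z' (s + phrase_len T s - dx + dy)).+3.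
Proof.
move=> gt0_s le_sp lt_pe; have sT := size_T; have sT' := size_T'.
have [j lt_js eq_j] := phrase_source T gt0_s.
have le_len := phrase_len_le T s.
have gt0_len : 0 < phrase_len T s by lia.
set e' := s + phrase_len T s - dx + dy.
case: (leqP e' p.+1) => [le_e'|lt_e'].
  case: (leqP e' s) => [le_e's|lt_se']; first by have := zfrom_antitone T' le_e's; lia.
  have := zfrom'_phrase_prefix (m := e' - s - 1) gt0_s; rewrite (_ : s + _ + 1 = e'); lia.
(* Copy up to the edit, take the edited letter as a literal, then copy the
   rest of the phrase from the shifted source. *)
have to_edit : z' s <= (z' p.+1).+1.
  by have := zfrom'_phrase_prefix (m := p - s) gt0_s; rewrite addn1 subnKC //; apply; lia.
suff : z' p.+1 <= (z' e').+2 by lia.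
rewrite (_ : e' = p.+1 + (e' - p - 2) + 1); last lia.
apply: (zfrom'_copy (r := j + (p.+1 + dx - dy - s))); try lia.
have := eq_take_drop_shift (b := p.+1 + dx - dy - s) (a := e' - p - 2) eq_j.
rewrite (_ : s + _ = p + dx + (1 - dy)) ?take_drop_after => [->|]; try lia.
by congr (take _ (drop _ _)); lia.
Qed.

Lemma zfrom'_before s : 0 < s -> s <= p -> z' s <= (2 * z s).+1.
Proof.
have sT := size_T; have sT' := size_T'.
elim/(@phrase_ind _ T): s => [s le_s | s lt_s IH] gt0_s le_sp.
  rewrite [z s]zfrom_out //; have := zfrom_leS T' s.
  by rewrite [z' s.+1]zfrom_out //; lia.
have gt0_len := phrase_len_gt0 lt_s; have le_len := phrase_len_le T s.
rewrite (zfrom_step lt_s).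
case: (leqP (s + phrase_len T s) p) => [le_ep|lt_pe].
  have prefix : z' s <= (z' (s + phrase_len T s)).+1.
    have := zfrom'_phrase_prefix (m := (phrase_len T s).-1) gt0_s.
    by rewrite addn1 -addnS prednK //; apply; lia.
  by have := IH (ltn_addr _ gt0_s) le_ep; lia.
have := zfrom'_edited_phrase gt0_s le_sp lt_pe.
by have := zfrom'_after lt_pe; lia.
Qed.

Lemma z77sr_edit : 0 < size T -> z77sr T' <= 2 * z77sr T.
Proof.
move=> gt0_T; have sT := size_T; have sT' := size_T'.
rewrite -[z77sr T]/(z 0) -[z77sr T']/(z' 0) (zfrom_step gt0_T) phrase_len0 // add0n.
have step0 := zfrom_leS T' 0.
case: (posnP p) => [p0|gt0_p]; last by have := zfrom'_before (ltnSn 0) gt0_p; lia.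
have le_2 : 1 - dx + dy <= 2 by lia.
have after_1 : z' (1 - dx + dy) <= 2 * z 1 by apply: zfrom'_after; rewrite p0.
by have := zfrom_leS T' 1; have := zfrom_antitone T' le_2; lia.
Qed.

End OneEdit.

Section EditDistanceOne.
Variable A : eqType.
Implicit Types s t : seq A.

Lemma ed_cons (a b : A) s t : ed (a :: s) (b :: t) =
  minn (minn (ed s (b :: t)).+1 (ed (a :: s) t).+1) (ed s t + (a != b)).
Proof. by []. Qed.

Lemma ed_ge_size_diff s t : size t - size s <= ed s t /\ size s - size t <= ed s t.
Proof.
elim: s t => [|a s IH] t; first by rewrite /=; lia.
elim: t => [|b t IHt]; first by rewrite /=; lia.
by rewrite ed_cons; have := IH t; have := IH (b :: t); move: IHt; rewrite /=; lia.
Qed.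

Lemma ed_eq0 s t : ed s t = 0 -> s = t.
Proof.
elim: s t => [|a s IH] [|b t] //; rewrite ed_cons => ed0.
have : ed s t + (a != b) = 0 by lia.
by case: eqVneq => [<- | _]; rewrite ?addn0 ?addn1 // => /IH ->.
Qed.

Lemma ed1_subst s t : ed s t = 1 -> size t = size s ->
  exists u a c v, s = u ++ a :: v /\ t = u ++ c :: v.
Proof.
elim: s t => [|a s IH] [|b t] //; rewrite ed_cons => ed1 [eq_size].
have [ge_l _] := ed_ge_size_diff s (b :: t); have [_ ge_r] := ed_ge_size_diff (a :: s) t.
rewrite [size (b :: t)]/= in ge_l; rewrite [size (a :: s)]/= in ge_r.
have : ed s t + (a != b) = 1 by lia.
case: eqVneq => [<- | _]; rewrite ?addn0 ?addn1.
  by case/IH=> // u [a' [c [v [-> ->]]]]; exists (a :: u), a', c, v.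
by case=> /ed_eq0 ->; exists [::], a, b, t.
Qed.

Lemma ed1_ins s t : ed s t = 1 -> size t = (size s).+1 ->
  exists u c v, s = u ++ v /\ t = u ++ c :: v.
Proof.
elim: s t => [|a s IH] [|b t] //.
  by case: t => // _ _; exists [::], b, [::].
rewrite ed_cons => ed1 [eq_size].
have [ge_l _] := ed_ge_size_diff s (b :: t); have [ge_d _] := ed_ge_size_diff s t.
rewrite [size (b :: t)]/= in ge_l.
have [/ed_eq0 <-|] : ed (a :: s) t = 0 \/ ed s t + (a != b) = 1 by lia.
  by exists [::], b, (a :: s).
case: eqVneq => [<- | _]; rewrite ?addn0; last lia.
by case/IH=> // u [c [v [-> ->]]]; exists (a :: u), c, v.
Qed.

Lemma ed1_del s t : ed s t = 1 -> size s = (size t).+1 ->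
  exists u a v, s = u ++ a :: v /\ t = u ++ v.
Proof.
elim: s t => [|a s IH] [|b t] //.
  by case: s {IH} => // _ _; exists [::], a, [::].
rewrite ed_cons => ed1 [eq_size].
have [_ ge_r] := ed_ge_size_diff (a :: s) t; have [_ ge_d] := ed_ge_size_diff s t.
rewrite [size (a :: s)]/= in ge_r.
have [/ed_eq0 <-|] : ed s (b :: t) = 0 \/ ed s t + (a != b) = 1 by lia.
  by exists [::], a, s.
case: eqVneq => [<- | _]; rewrite ?addn0; last lia.
by case/IH=> // u [c [v [-> ->]]]; exists (a :: u), c, v.
Qed.

End EditDistanceOne.

Theorem mainTheorem11 :
  forall (A : eqType) (n : nat) (T : seq A), size T = n -> 0 < n ->
    (forall T' : seq A, size T' = n -> ed T T' = 1 ->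
        z77sr T' <= 2 * z77sr T /\ z77sr T' - z77sr T <= z77sr T) /\
    (forall T' : seq A, size T' = n.+1 -> ed T T' = 1 ->
        z77sr T' <= 2 * z77sr T /\ z77sr T' - z77sr T <= z77sr T) /\
    (forall T' : seq A, size T' = n.-1 -> ed T T' = 1 ->
        z77sr T' <= 2 * z77sr T /\ z77sr T' - z77sr T <= z77sr T).
Proof.
move=> A n T <- gt0_T.
have additive T' : z77sr T' <= 2 * z77sr T ->
    z77sr T' <= 2 * z77sr T /\ z77sr T' - z77sr T <= z77sr T by split; lia.
split; [|split] => T' size_T' ed1; apply: additive.
- have [u [a [c [v [eq_T eq_T']]]]] := ed1_subst ed1 size_T'.
  by rewrite eq_T eq_T' in gt0_T *; apply: (@z77sr_edit _ u v [:: a] [:: c]).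
- have [u [c [v [eq_T eq_T']]]] := ed1_ins ed1 size_T'.
  by rewrite eq_T eq_T' in gt0_T *; apply: (@z77sr_edit _ u v [::] [:: c]).
- have size_T : size T = (size T').+1 by rewrite size_T' prednK.
  have [u [a [v [eq_T eq_T']]]] := ed1_del ed1 size_T.
  by rewrite eq_T eq_T' in gt0_T *; apply: (@z77sr_edit _ u v [:: a] [::]).
Qed.
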